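(* For every integer $k\ge 0$ and every list $L$ of $k$ pairwise distinct elements, running $\mathrm{Permutations}(L,0,\mathrm{Func})$ calls $\mathrm{Func}$ exactly $k!$ times, and the lists passed to $\mathrm{Func}$ are exactly the $k!$ permutations (orderings) of the elements of $L$, each occurring exactly once.
   Context: Lists are 0-indexed. For a list $L$, $\mathrm{extract}(L,j)$ removes the element at position $j$ from $L$ and returns it; $\mathrm{Insert}(L,i,x)$ inserts $x$ into $L$ so that it occupies position $i$, shifting the elements previously at positions $\ge i$ one step to the right. Each combined operation $\mathrm{Insert}(L,i,\mathrm{extract}(L,j))$ first extracts, then inserts, so the length of $L$ is unchanged. The recursive procedure $\mathrm{Permutations}(L,i,\mathrm{Func})$ (with $\mathrm{Func}$ a callback applied to the current state of the list) is: let $n=\mathrm{length}(L)$. If $i\ge n-1$, call $\mathrm{Func}(L)$. Otherwise: (1) call $\mathrm{Permutations}(L,i+1,\mathrm{Func})$; (2) do $\mathrm{Insert}(L,i,\mathrm{extract}(L,i+1))$ and call $\mathrm{Permutations}(L,i+1,\mathrm{Func})$; (3) repeat $\max(n-i-3,0)$ times: if $n-i$ is even, do $\mathrm{Insert}(L,i,\mathrm{extract}(L,n-1))$, otherwise do $\mathrm{Insert}(L,i,\mathrm{extract}(L,i+1))$; then call $\mathrm{Permutations}(L,i+1,\mathrm{Func})$; (4) if $n-i>2$: do $\mathrm{Insert}(L,i,\mathrm{extract}(L,i+1))$ and call $\mathrm{Permutations}(L,i+1,\mathrm{Func})$. *)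

From mathcomp Require Import all_boot.
Set Implicit Arguments. Unset Strict Implicit. Unset Printing Implicit Defensive.

Section PermAlgo.
Variable T : Type.

Definition Insert (L : seq T) (i : nat) (x : T) : seq T :=
  take i L ++ x :: drop i L.

(* Insert(L, i, extract(L, j)): remove the element at position j, then insert
   it at position i.  (If j is out of range, extract is undefined; we leave L
   unchanged -- this case never arises in the procedure.) *)
Definition move (L : seq T) (i j : nat) : seq T :=
  match drop j L with
  | x :: _ => Insert (take j L ++ drop j.+1 L) i x
  | [::] => L
  end.

(* perm_aux fuel i L = (list of the states passed to Func, in call order,
   final state of L).  The fuel only ensures termination; called with
   fuel = size L from i = 0 it never runs out. *)
Fixpoint perm_aux (fuel i : nat) (L : seq T) : seq (seq T) * seq T :=
  match fuel with
  | 0 => ([:: L], L)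
  | f.+1 =>
    let n := size L in
    if n.-1 <= i then ([:: L], L) else
    let '(o1, L1) := perm_aux f i.+1 L in
    let '(o2, L2) := perm_aux f i.+1 (move L1 i i.+1) in
    let step (st : seq (seq T) * seq T) :=
      let '(o, M) := st in
      let M' := if ~~ odd (n - i) then move M i n.-1 else move M i i.+1 in
      let '(o', M'') := perm_aux f i.+1 M' in
      (o ++ o', M'') in
    let '(o3, L3) := iter (n - i - 3) step (o1 ++ o2, L2) in
    if 2 < n - i then
      let '(o4, L4) := perm_aux f i.+1 (move L3 i i.+1) in (o3 ++ o4, L4)
    else (o3, L3)
  end.

Definition Permutations (L : seq T) (i : nat) : seq (seq T) * seq T :=
  perm_aux (size L) i L.

Definition func_calls (L : seq T) (i : nat) : seq (seq T) := (Permutations L i).1.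

End PermAlgo.

From mathcomp Require Import all_boot zify.
Set Implicit Arguments. Unset Strict Implicit. Unset Printing Implicit Defensive.

(* A call at level i+1 on x :: s behaves as a call at level i on s with x kept
   in front ([perm_aux_cons]), so everything reduces to level 0.  There,
   Permutations(s, 0) makes n = size s recursive calls; by induction the call on
   a state x :: t outputs x :: p for every permutation p of t, and leaves the
   state as x :: final_order t, where [final_order] is a fixed rearrangement of
   positions.  Since the moves between calls are positional as well, the n
   states are computed explicitly: for odd n each round is one step along a
   single n-cycle of positions, and for even n, writing s = a0 :: a1 :: a2 :: w,
   their heads are a0, a2, rev w, a1.  Either way the n heads are a
   rearrangement of s, so the outputs are the permutations of s, each exactly
   once. *)

Section Recursion.
Variable T : Type.
Implicit Types (L M s t u : seq T) (a b x : T).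

Definition swap s := if s is a :: b :: r then b :: a :: r else s.

Lemma size_swap s : size (swap s) = size s.
Proof. by case: s => [|a [|b r]]. Qed.

Lemma swapK : involutive swap.
Proof. by case=> [|a [|b r]]. Qed.

Lemma move_cons x L i j : move (x :: L) i.+1 j.+1 = x :: move L i j.
Proof. by rewrite /move /=; case: (drop j L). Qed.

Lemma move01 L : move L 0 1 = swap L.
Proof. by case: L => [|a [|b r]] //; rewrite /move /Insert /= drop0. Qed.

Lemma move_last u b : move (rcons u b) 0 (size u) = b :: u.
Proof.
rewrite /move -cats1 drop_size_cat //= /Insert take0 drop0 take_size_cat //.
by rewrite drop_oversize ?cats0 // size_cat addn1.
Qed.

Lemma size_move L i j : size (move L i j) = size L.
Proof.
rewrite /move /Insert; case E: (drop j L) => [//|x r].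
have -> : drop j.+1 L = r by rewrite -add1n -drop_drop E drop1.
rewrite size_cat /= addnS -size_cat cat_take_drop.
by rewrite -[in RHS](cat_take_drop j L) E !size_cat addnS.
Qed.

Definition level (blk : seq T -> seq (seq T) * seq T) (i : nat) L :=
  let n := size L in
  let '(o1, L1) := blk L in
  let '(o2, L2) := blk (move L1 i i.+1) in
  let step (st : seq (seq T) * seq T) :=
    let '(o, M) := st in
    let M' := if ~~ odd (n - i) then move M i n.-1 else move M i i.+1 in
    let '(o', M'') := blk M' in
    (o ++ o', M'') in
  let '(o3, L3) := iter (n - i - 3) step (o1 ++ o2, L2) in
  if 2 < n - i then
    let '(o4, L4) := blk (move L3 i i.+1) in (o3 ++ o4, L4)
  else (o3, L3).

Lemma perm_auxS f i L : perm_aux f.+1 i L =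
  if (size L).-1 <= i then ([:: L], L) else level (perm_aux f i.+1) i L.
Proof. by []. Qed.

Definition cons_run x (run : seq (seq T) * seq T) := (map (cons x) run.1, x :: run.2).

Lemma level_cons x blk blk' i s : 0 < size s ->
    (forall M, blk (x :: M) = cons_run x (blk' M)) ->
  level blk i.+1 (x :: s) = cons_run x (level blk' i s).
Proof.
move=> s_gt0 blkE; rewrite /level /= !subSS blkE; case: (blk' s) => o1 L1 /=.
rewrite move_cons blkE; case: (blk' _) => o2 L2 /=.
set F := (fun '(o, M) => _); set G := (fun '(o, M) => _).
have iterFG k st : iter k F (cons_run x st) = cons_run x (iter k G st).
  elim: k => //= k ->; case: (iter k G st) => o M /=; rewrite /F /G.
  rewrite -[X in move _ _ X](prednK s_gt0) -!fun_if !move_cons blkE.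
  by case: (blk' _) => ? ?; rewrite /cons_run /= map_cat.
rewrite -map_cat -[(_, x :: L2)]/(cons_run x (o1 ++ o2, L2)) iterFG.
case: (iter _ G _) => o3 L3 /=; case: ifP => // _.
by rewrite move_cons blkE; case: (blk' _) => ? ?; rewrite /cons_run /= map_cat.
Qed.

Lemma perm_aux_cons f i x s :
  perm_aux f i.+1 (x :: s) = cons_run x (perm_aux f i s).
Proof.
elim: f i x s => [//|f IHf] i x s; rewrite !perm_auxS /=.
have -> : (size s <= i.+1) = ((size s).-1 <= i) by apply/idP/idP; lia.
by case: ifP => // ?; apply: level_cons => //; lia.
Qed.

(* The positions j of the moves Insert(L, 0, extract(L, j)) of steps (2)-(4) at
   level 0, each followed by a recursive call. *)
Definition level_moves n :=
  1 :: nseq (n - 3) (if odd n then 1 else n.-1) ++ (if 2 < n then [:: 1] else [::]).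

Fixpoint run_states (e : seq T -> seq T) js M :=
  if js is j :: js' then move M 0 j :: run_states e js' (e (move M 0 j)) else [::].

Definition run_final (e : seq T -> seq T) js M := foldl (fun M j => e (move M 0 j)) M js.

Lemma level_run blk e s :
    (forall L, size L = size s -> (blk L).2 = e L) ->
    (forall L, size (e L) = size L) ->
  level blk 0 s =
    (flatten [seq (blk X).1 | X <- s :: run_states e (level_moves (size s)) (e s)],
     run_final e (level_moves (size s)) (e s)).
Proof.
move=> blkE sizeE.
pose F (st : seq (seq T) * seq T) j := let '(o, M) := blk (move st.2 0 j) in (st.1 ++ o, M).
have foldF js o L : size L = size s -> foldl F (o, e L) js =
    (o ++ flatten [seq (blk X).1 | X <- run_states e js (e L)], run_final e js (e L)).
  elim: js o L => [|j js IH] o L sL /=; first by rewrite cats0.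
  have sM : size (move (e L) 0 j) = size s by rewrite size_move sizeE.
  by rewrite /F /= [blk _]surjective_pairing blkE // IH // catA.
have iterF k j st : iter k (fun st => F st j) st = foldl F st (nseq k j).
  by elim: k st => // k IH st; rewrite iterSr IH.
transitivity (foldl F (blk s) (level_moves (size s))); last first.
  by rewrite {1}[blk s]surjective_pairing blkE // foldF.
rewrite /level /level_moves subn0 /=; case: (blk s) => o1 L1 /=.
rewrite foldl_cat -iterF [F (o1, L1) 1]/F /=; case: (blk _) => o2 L2.
set step := (fun '(o, M) => _).
rewrite -(@eq_iter _ step); last by case=> o M; rewrite /step /F /=; case: odd.
by case: (iter _ step _) => o3 L3; case: ifP.
Qed.

End Recursion.

Arguments swap {T} s.

Section LevelZero.
Variable T : Type.
Implicit Types (L M s t u : seq T) (a b x : T).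

Definition final_order s :=
  if odd (size s) then swap s else
  if s is a0 :: a1 :: a2 :: w then a1 :: swap (w ++ [:: a2; a0]) else swap s.

Definition final_order_tail L := if L is x :: t then x :: final_order t else L.

Lemma size_final_order s : size (final_order s) = size s.
Proof.
rewrite /final_order; case: ifP => _; first exact: size_swap.
by case: s => [|a0 [|a1 [|a2 w]]] //=; rewrite size_swap size_cat addn2.
Qed.

Lemma size_final_order_tail L : size (final_order_tail L) = size L.
Proof. by case: L => //= x t; rewrite size_final_order. Qed.

Lemma final_order_small s : size s <= 1 -> final_order s = s.
Proof. by case: s => [|a [|b r]]. Qed.

Definition level_states s :=
  s :: run_states final_order_tail (level_moves (size s)) (final_order_tail s).

Definition level_final s := run_final final_order_tail (level_moves (size s)) (final_order_tail s).

Lemma cat_inj s1 s2 t1 t2 :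
  size s1 = size s2 -> s1 ++ t1 = s2 ++ t2 -> s1 = s2 /\ t1 = t2.
Proof. by elim: s1 s2 => [|x s1 IH] [|y s2] //= [/IH eq12] [-> /eq12[-> ->]]. Qed.

Fixpoint evens s := if s is x :: r then x :: odds r else [::]
with odds s := if s is _ :: r then evens r else [::].

Lemma evens_odds_cat s t :
  evens (s ++ t) = evens s ++ (if odd (size s) then odds t else evens t) /\
  odds (s ++ t) = odds s ++ (if odd (size s) then evens t else odds t).
Proof. by elim: s => //= x s [-> ->]; case: odd. Qed.

Lemma count_evens_odds p s : count p (evens s) + count p (odds s) = count p s.
Proof. by elim: s => //= x s <-; lia. Qed.

Lemma size_evens_odds s : size (evens s) = uphalf (size s) /\ size (odds s) = (size s)./2.
Proof. by elim: s => //= x s [-> ->]; rewrite uphalfE. Qed.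

Lemma evens_odds_inj s t : size s = size t ->
  evens s = evens t -> odds s = odds t -> s = t.
Proof.
by elim: s t => [|x s IH] [|y t] //= [st] [-> ee] eo; rewrite (IH t).
Qed.

Definition odd_step L := swap (final_order_tail L).

Lemma size_odd_step L : size (odd_step L) = size L.
Proof. by rewrite size_swap size_final_order_tail. Qed.

Lemma run_states_swaps e k L :
  run_states e (nseq k 1) (e L) = traject (swap \o e) (swap (e L)) k.
Proof. by elim: k L => //= k IH L; rewrite move01 IH. Qed.

Lemma run_final_swaps e k L :
  run_final e (nseq k 1) (e L) = e (iter k (swap \o e) L).
Proof. by elim: k L => // k IH L; rewrite iterSr /= move01 IH. Qed.

(* For odd size, [odd_step] moves the entries along a single cycle of positions;
   [odd_cycle L] lists the entries of [L] along that cycle, from position 0. *)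
Definition odd_cycle L :=
  match L with
  | x0 :: x1 :: x2 :: x3 :: x4 :: w =>
      x0 :: x2 :: evens w ++ [:: x3; x4] ++ odds w ++ [:: x1]
  | [:: x0; x1; x2] => [:: x0; x2; x1]
  | _ => L
  end.

Lemma odd_cycle_step L : odd (size L) ->
  odd_cycle (odd_step L) = rot 1 (odd_cycle L).
Proof.
case: L => [|c0 [|c1 [|c2 [|c3 [|d0 [|d1 [|r0 r]]]]]]] //=.
rewrite !negbK => /negPf r_even.
rewrite /odd_step /= /final_order /= r_even /=.
have [-> ->] := evens_odds_cat r [:: c3; c1].
by rewrite r_even /rot /= -!catA /= -!catA.
Qed.

Lemma odd_cycle_inj L L' : size L = size L' -> odd_cycle L = odd_cycle L' -> L = L'.
Proof.
case: L => [|x0 [|x1 [|x2 [|x3 [|x4 w]]]]];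
  case: L' => [|y0 [|y1 [|y2 [|y3 [|y4 w']]]]] //= sw; try by case=> *; subst.
case: sw => sw [-> ->].
have [ew ow] := size_evens_odds w; have [ew' ow'] := size_evens_odds w'.
case/cat_inj; first by rewrite ew ew' sw.
move=> Ee [-> ->] /cat_inj[]; first by rewrite ow ow' sw.
by move=> Eo [->]; rewrite (evens_odds_inj sw Ee Eo).
Qed.

Lemma head_odd_cycle x0 L : head x0 (odd_cycle L) = head x0 L.
Proof. by case: L => [|a [|b [|c [|d [|e w]]]]]. Qed.

Lemma size_odd_cycle L : size (odd_cycle L) = size L.
Proof.
case: L => [|a [|b [|c [|d [|e w]]]]] //=; rewrite !size_cat /= size_cat.
have [-> ->] := size_evens_odds w.
by rewrite uphalf_half /=; have := odd_double_half (size w); rewrite -addnn; lia.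
Qed.

Section OddLevel.
Variable s : seq T.
Hypothesis s_odd : odd (size s).

Lemma size_iter_odd_step k : size (iter k odd_step s) = size s.
Proof. by elim: k => //= k IH; rewrite size_odd_step. Qed.

Lemma odd_cycle_iter k : k <= size s ->
  odd_cycle (iter k odd_step s) = rot k (odd_cycle s).
Proof.
elim: k => [|k IH] lt_ks; first by rewrite rot0.
by rewrite iterS odd_cycle_step ?size_iter_odd_step // IH 1?ltnW // -rotD ?size_odd_cycle.
Qed.

Lemma iter_odd_step_size : iter (size s) odd_step s = s.
Proof.
apply: odd_cycle_inj; first exact: size_iter_odd_step.
by rewrite odd_cycle_iter // -(size_odd_cycle s) rot_size.
Qed.

Lemma head_iter_odd_step x0 k : k < size s ->
  head x0 (iter k odd_step s) = nth x0 (odd_cycle s) k.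
Proof.
move=> lt_ks; rewrite -head_odd_cycle odd_cycle_iter 1?ltnW // /rot -nth0.
by rewrite nth_cat size_drop size_odd_cycle subn_gt0 lt_ks nth_drop addn0.
Qed.

Lemma odd_level x0 : 1 < size s ->
  map (head x0) (level_states s) = odd_cycle s /\ level_final s = final_order s.
Proof.
move=> s_gt1; have s_gt2 : 2 < size s by move: s_odd s_gt1; case: (size s) => [|[|[|]]].
have s_gt0 : 0 < size s by apply: ltnW.
rewrite /level_states /level_final.
have -> : level_moves (size s) = nseq (size s).-1 1.
  rewrite /level_moves s_odd; have -> : (size s).-1 = (size s - 3 + 1).+1 by lia.
  by rewrite /= nseqD s_gt2.
rewrite run_states_swaps run_final_swaps; split.
  rewrite -trajectS prednK //; apply: (@eq_from_nth _ x0).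
    by rewrite size_map size_traject size_odd_cycle.
  move=> k; rewrite size_map size_traject => lt_ks.
  by rewrite (nth_map s) ?size_traject // nth_traject // head_iter_odd_step.
rewrite /final_order s_odd -[final_order_tail _]swapK.
by rewrite -[swap (final_order_tail _)]/(odd_step _) -iterS prednK // iter_odd_step_size.
Qed.

End OddLevel.

(* The middle rounds of an even level: each brings the last entry to the front,
   and the call on the result swaps the two entries after it. *)
Lemma even_run x0 x a r u : ~~ odd (size r + size u) ->
  let js := nseq (size u) (size r + size u).+1 ++ [:: 1] in
  map (head x0) (run_states final_order_tail js (x :: a :: r ++ u)) = rev u ++ [:: a] /\
  run_final final_order_tail js (x :: a :: r ++ u) = a :: swap (u ++ x :: r).
Proof.
elim/last_ind: u x r => [|u b IH] x r /=.
  by rewrite addn0 drop0 cats0 /final_order /= => /negPf ->.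
rewrite size_rcons addnS /= => ru_odd.
have -> : (size r + size u).+2 = size (x :: a :: r ++ u) by rewrite /= size_cat.
rewrite -rcons_cat -!rcons_cons move_last /= /final_order /= size_cat ru_odd.
have := IH b (x :: r); rewrite /= addSn ru_odd => /(_ isT) [heads final].
by rewrite heads final rev_rcons cat_rcons.
Qed.

Definition level_heads s :=
  if odd (size s) then odd_cycle s else
  if s is a0 :: a1 :: a2 :: w then a0 :: a2 :: rev w ++ [:: a1] else s.

Lemma level_trajectory x0 s : 1 < size s ->
  map (head x0) (level_states s) = level_heads s /\ level_final s = final_order s.
Proof.
move=> s_gt1; rewrite /level_heads; case: ifP => s_odd; first exact: odd_level.
rewrite /final_order s_odd.
case: s s_gt1 s_odd => [|a0 [|a1 [|a2 w]]] //= _; rewrite !negbK => /negbFE w_odd.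
rewrite /level_states /level_final /level_moves /= w_odd /final_order /= w_odd move01.
have -> : (size w).+3 - 3 = size w by lia.
have := @even_run x0 a2 a1 [:: a0] w; rewrite /= w_odd add1n => /(_ isT)[heads final].
by rewrite /final_order /= w_odd heads final.
Qed.

Lemma level_perm_aux f s :
    (forall t, (size t).-1 <= f -> (perm_aux f 0 t).2 = final_order t) ->
    (size s).-1 <= f.+1 ->
  level (perm_aux f 1) 0 s =
    (flatten [seq (perm_aux f 1 X).1 | X <- level_states s], level_final s).
Proof.
move=> finalE hf; apply: level_run => [|L]; last exact: size_final_order_tail.
case=> [|x t] st; first by case: f {finalE hf}.
by rewrite perm_aux_cons /= finalE //; move: hf; rewrite -st /=; lia.
Qed.

Lemma perm_aux_final f s : (size s).-1 <= f -> (perm_aux f 0 s).2 = final_order s.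
Proof.
elim: f s => [|f IH] s hf; first by rewrite final_order_small //; lia.
rewrite perm_auxS; case: ifP => [small|/negbT big].
  by rewrite final_order_small //; lia.
rewrite level_perm_aux //; case: s big {hf} => [//|x0 t] big.
by have [_ ->] := level_trajectory x0 (ltac:(lia) : 1 < size (x0 :: t)).
Qed.

End LevelZero.

Section Calls.
Variable T : eqType.
Implicit Types (L M s t : seq T) (a b x : T).

Lemma perm_swap s : perm_eq (swap s) s.
Proof. by case: s => [|a [|b r]] //; apply/permP => p /=; lia. Qed.

Lemma perm_move L i j : perm_eq (move L i j) L.
Proof.
rewrite /move /Insert; case E: (drop j L) => [//|x r].
have -> : drop j.+1 L = r by rewrite -add1n -drop_drop E drop1.
apply/permP => p; rewrite -[in RHS](cat_take_drop j L) E.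
have := congr1 (count p) (cat_take_drop i (take j L ++ r)).
by rewrite !count_cat /=; lia.
Qed.

Lemma perm_final_order s : perm_eq (final_order s) s.
Proof.
rewrite /final_order; case: ifP => _; first exact: perm_swap.
case: s => [|a0 [|a1 [|a2 w]]] //=; first exact: (perm_swap [:: a0; a1]).
apply/permP => p; have /permP/(_ p) := perm_swap (w ++ [:: a2; a0]).
by rewrite /= !count_cat /=; lia.
Qed.

Lemma perm_final_order_tail L : perm_eq (final_order_tail L) L.
Proof. by case: L => //= x t; rewrite perm_cons perm_final_order. Qed.

Lemma perm_run_states e js M : (forall L, perm_eq (e L) L) ->
  {in run_states e js M, forall X, perm_eq X M}.
Proof.
move=> perm_e; elim: js M => //= j js IH M X; rewrite inE => /predU1P[-> | /IH].
  exact: perm_move.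
by move/perm_trans; apply; rewrite (perm_trans (perm_e _)) ?perm_move.
Qed.

Lemma perm_level_states s : {in level_states s, forall X, perm_eq X s}.
Proof.
move=> X; rewrite inE => /predU1P[-> // | /perm_run_states-/(_ perm_final_order_tail)].
by move/perm_trans; apply; apply: perm_final_order_tail.
Qed.

Lemma perm_odd_cycle L : perm_eq (odd_cycle L) L.
Proof.
case: L => [|x0 [|x1 [|x2 [|x3 [|x4 w]]]]] //; apply/permP => p /=; try lia.
by have := count_evens_odds p w; rewrite !count_cat /= count_cat /=; lia.
Qed.

Lemma perm_level_heads s : perm_eq (level_heads s) s.
Proof.
rewrite /level_heads; case: ifP => _; first exact: perm_odd_cycle.
case: s => [|a0 [|a1 [|a2 w]]] //; apply/permP => p.
by rewrite /= count_cat count_rev /=; lia.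
Qed.

Lemma perm_allpairs_heads x0 s Xs (O : seq T -> seq (seq T)) :
    0 < size s -> uniq s -> perm_eq (map (head x0) Xs) s ->
    {in Xs, forall X, perm_eq X s} ->
    {in Xs, forall X, perm_eq (O X) (permutations (behead X))} ->
  perm_eq [seq head x0 X :: t | X <- Xs, t <- O X] (permutations s).
Proof.
move=> s_gt0 s_uniq heads_s perm_Xs perm_O.
rewrite perm_sym (perm_trans (permutationsE s_gt0)) // undup_id // perm_sym.
apply: (@perm_trans _ [seq x :: t | x <- map (head x0) Xs, t <- permutations (rem x s)]).
  rewrite allpairs_mapl; apply: perm_allpairs_dep => // X X_in.
  apply: (perm_trans (perm_O X X_in)); apply: perm_permutations.
  have := perm_Xs X X_in; case: X {X_in} => [|x t] Xs_s.
    by move: s_gt0; rewrite -(perm_size Xs_s).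
  have s_x : x \in s by rewrite -(perm_mem Xs_s) mem_head.
  by rewrite -(perm_cons x) (perm_trans Xs_s) // perm_to_rem.
by apply: perm_allpairs_dep.
Qed.

Lemma permutations_small s : size s <= 1 -> permutations s = [:: s].
Proof. by case: s => [|a [|b r]]. Qed.

Lemma perm_aux_calls f s : uniq s -> (size s).-1 <= f ->
  perm_eq (perm_aux f 0 s).1 (permutations s).
Proof.
elim: f s => [|f IH] s s_uniq hf; first by rewrite permutations_small //; lia.
rewrite perm_auxS; case: ifP => [small|/negbT big].
  by rewrite permutations_small //; lia.
rewrite level_perm_aux //; last by move=> t; apply: perm_aux_final.
case: s s_uniq big hf => [//|x0 t] s_uniq big hf.
have [heads _] := level_trajectory x0 (ltac:(lia) : 1 < size (x0 :: t)).
set s := x0 :: t in s_uniq hf heads *.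
have -> : flatten [seq (perm_aux f 1 X).1 | X <- level_states s] =
    [seq head x0 X :: u | X <- level_states s, u <- (perm_aux f 0 (behead X)).1].
  congr flatten; apply/eq_in_map => -[|x u] /perm_level_states; last first.
    by rewrite perm_aux_cons.
  by move/perm_size.
apply: perm_allpairs_heads => //; first by rewrite heads perm_level_heads.
  exact: perm_level_states.
move=> X /perm_level_states X_s; apply: IH.
  by case: X X_s => //= x u /perm_uniq; rewrite s_uniq => /andP[].
by rewrite size_behead (perm_size X_s) /=; move: hf => /=; lia.
Qed.

End Calls.

Theorem mainTheorem3 (T : eqType) (k : nat) (L : seq T) :
  size L = k -> uniq L ->
  [/\ size (func_calls L 0) = k`!,
      uniq (func_calls L 0) &
      forall s : seq T, s \in func_calls L 0 <-> perm_eq s L].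
Proof.
move=> <- L_uniq; have calls := perm_aux_calls L_uniq (leq_pred (size L)).
split; first by rewrite (perm_size calls) size_permutations.
  by rewrite (perm_uniq calls) permutations_uniq.
by move=> s; rewrite (perm_mem calls) mem_permutations.
Qed.
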